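(* Let $\mathcal{L}$ be the set of loss functions that are both mixable and proper, and let $E$ be the set of tuples $(\gamma^1,\dots,\gamma^N,\eta^1,\dots,\eta^N,\lambda^1,\dots,\lambda^N)\in[0,1]^N\times(0,\infty)^N\times\mathcal{L}^N$ such that $\lambda^n$ is $\eta^n$-mixable for all $n=1,\dots,N$. Fix $n\in\{1,\dots,N\}$ and define $Q^n:(E\times[0,1]\times\{0,1\})^*\to[0,\infty]$ by $$Q^n(e_1,\pi_1,\omega_1,\dots,e_T,\pi_T,\omega_T):=\prod_{t=1}^T\exp\Bigl(\eta_t^n\bigl(\lambda_t^n(\pi_t,\omega_t)-\lambda_t^n(\gamma_t^n,\omega_t)\bigr)\Bigr),$$ where $e_t=(\gamma_t^1,\dots,\gamma_t^N,\eta_t^1,\dots,\eta_t^N,\lambda_t^1,\dots,\lambda_t^N)$ and the empty product equals $1$. Then $Q^n$ is a supermartingale.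
   Context: A loss function is a map $\lambda:[0,1]\times\{0,1\}\to[0,\infty]$ satisfying: (1) $\lambda(\gamma,0)$, $\lambda(\gamma,1)$ continuous in $\gamma\in[0,1]$ (standard topology on $[0,\infty]$); (2) some $\gamma$ has both values finite; (3) no $\gamma$ has both values infinite. Superprediction set: $\Sigma_\lambda=\{(x,y)\in[0,\infty)^2:\exists\gamma\ \lambda(\gamma,0)\le x,\ \lambda(\gamma,1)\le y\}$. $\lambda$ is $\eta$-mixable ($\eta>0$) if $\{(e^{-\eta x},e^{-\eta y}):(x,y)\in\Sigma_\lambda\}$ is convex; mixable if $\eta$-mixable for some $\eta>0$; proper if $\pi\lambda(\pi,1)+(1-\pi)\lambda(\pi,0)\le\pi\lambda(\pi',1)+(1-\pi)\lambda(\pi',0)$ for all $\pi,\pi'\in[0,1]$. A function $S:(E\times[0,1]\times\{0,1\})^*\to(-\infty,\infty]$ is a supermartingale if for any $T$, any $e_1,\dots,e_T\in E$, any $\pi_1,\dots,\pi_T\in[0,1]$ and any $\omega_1,\dots,\omega_{T-1}\in\{0,1\}$: $\pi_T S(e_1,\pi_1,\omega_1,\dots,e_T,\pi_T,1)+(1-\pi_T)S(e_1,\pi_1,\omega_1,\dots,e_T,\pi_T,0)\le S(e_1,\pi_1,\omega_1,\dots,e_{T-1},\pi_{T-1},\omega_{T-1})$. *)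

From HB Require Import structures.
From mathcomp Require Import all_boot all_order all_algebra.
From mathcomp Require Import all_classical all_reals all_analysis.
Set Implicit Arguments. Unset Strict Implicit. Unset Printing Implicit Defensive.
Import Order.TTheory GRing.Theory Num.Theory.
Import numFieldNormedType.Exports.
Local Open Scope classical_set_scope.
Local Open Scope ring_scope.

(* A prediction-loss pair: lambda g w, with outcome w : bool (true = 1, false = 0). *)
Definition lossfun (R : realType) := R -> bool -> \bar R.

Section Loss.
Variable R : realType.
Implicit Types (lam : lossfun R).

Definition is_loss lam : Prop :=
  (forall g w, g \in `[0, 1] -> (0 <= lam g w)%E) /\
  (forall w, {within `[(0:R), 1], continuous (fun g => lam g w)}) /\
  (exists2 g, g \in `[(0:R), 1] &
     (lam g false \is a fin_num) /\ (lam g true \is a fin_num)) /\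
  (forall g, g \in `[(0:R), 1] -> ~ (lam g false = +oo%E /\ lam g true = +oo%E)).

Definition superpred lam : set (R * R) :=
  [set xy | 0 <= xy.1 /\ 0 <= xy.2 /\
     exists2 g, g \in `[(0:R), 1] &
       (lam g false <= xy.1%:E)%E /\ (lam g true <= xy.2%:E)%E].

Definition mixable_with lam (eta : R) : Prop :=
  0 < eta /\
  @convex_set R (R * R)%type
    ((fun xy : R * R => (expR (- eta * xy.1), expR (- eta * xy.2)))
       @` superpred lam).

Definition mixable lam : Prop := exists eta, mixable_with lam eta.

Definition proper_loss lam : Prop :=
  forall p p', p \in `[(0:R), 1] -> p' \in `[(0:R), 1] ->
    (p%:E * lam p true + (1 - p)%:E * lam p false <=
     p%:E * lam p' true + (1 - p)%:E * lam p' false)%E.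

Definition in_L lam : Prop := is_loss lam /\ mixable lam /\ proper_loss lam.
End Loss.

Definition Etuple (R : realType) (N : nat) :=
  (('I_N -> R) * ('I_N -> R) * ('I_N -> lossfun R))%type.

Definition in_E (R : realType) (N : nat) (e : Etuple R N) : Prop :=
  let: (gam, eta, lam) := e in
  forall i : 'I_N, gam i \in `[(0:R), 1] /\ 0 < eta i /\ in_L (lam i) /\
                   mixable_with (lam i) (eta i).

Definition history (R : realType) (N : nat) := seq (Etuple R N * R * bool)%type.

Definition valid_history (R : realType) (N : nat) (h : history R N) : Prop :=
  forall x, x \in h -> in_E x.1.1 /\ x.1.2 \in `[(0:R), 1].

Definition supermartingale (R : realType) (N : nat) (S : history R N -> \bar R) : Prop :=
  (forall h, valid_history h -> S h != -oo%E) /\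
  forall (h : history R N) (e : Etuple R N) (p : R),
    valid_history h -> in_E e -> p \in `[(0:R), 1] ->
    (p%:E * S (rcons h (e, p, true)) + (1 - p)%:E * S (rcons h (e, p, false))
       <= S h)%E.

Definition Qfactor (R : realType) (N : nat) (n : 'I_N) (x : Etuple R N * R * bool)
  : \bar R :=
  let: (e, p, w) := x in
  let: (gam, eta, lam) := e in
  expeR ((eta n)%:E * (lam n p w - lam n (gam n) w))%E.

Definition Q (R : realType) (N : nat) (n : 'I_N) (h : history R N) : \bar R :=
  (\prod_(x <- h) Qfactor n x)%E.

From mathcomp Require Import all_boot all_order all_algebra.
From mathcomp Require Import all_classical all_reals all_analysis.
From mathcomp Require Import ring lra.
Import Order.TTheory GRing.Theory Num.Theory.
Import numFieldNormedType.Exports.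
Set Implicit Arguments. Unset Strict Implicit. Unset Printing Implicit Defensive.
Local Open Scope classical_set_scope.
Local Open Scope ring_scope.

(* Each step multiplies Q^n by a factor whose conditional mean under p is
     p e^(eta (lam(p,1) - lam(g,1))) + (1 - p) e^(eta (lam(p,0) - lam(g,0))),
   so it suffices that this is at most 1 for an eta-mixable proper loss.
   For p inside (0,1) and a point (x, y) of the superprediction set, move from
   (lam(p,0), lam(p,1)) towards (x, y) by a small step t in the exponential
   coordinates, where the set is convex.  By properness the expected loss under
   p cannot decrease along this path, while its derivative at t = 0 is
   (1 - M) / eta, M being the above mean with (x, y) in place of
   (lam(g,0), lam(g,1)); hence M <= 1.  Infinite values of lam(g,.) are
   approached by continuity through interior points, and p in {0,1} is
   properness itself. *)

Section RealFacts.
Variable R : realType.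

Lemma in01_weights_ge0 (p : R) : p \in `[0, 1] -> 0 <= p /\ 0 <= 1 - p.
Proof. by rewrite in_itv /= subr_ge0 => /andP. Qed.

Lemma interior01_mem (p : R) : 0 < p < 1 -> p \in `[0, 1].
Proof. by rewrite in_itv /= => /andP[/ltW -> /ltW]. Qed.

Lemma ln1Dx_ge (u : R) : -1/2 <= u -> u - 2 * u ^+ 2 <= ln (1 + u).
Proof.
move=> u_ge; have u1 : 0 < 1 + u by lra.
have := expR_ge1Dx (- ln (1 + u)).
rewrite expRN lnK ?posrE // -div1r ler_pdivlMr // => le_inv.
have : 0 <= u ^+ 2 * (1 + 2 * u) by rewrite mulr_ge0 ?sqr_ge0 //; lra.
rewrite expr2 in le_inv *; nra.
Qed.

(* d/dt [p ln(1 + t a) + (1 - p) ln(1 + t b)] at t = 0 is p a + (1 - p) b. *)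
Lemma ln_mean_gt0_near0 (p a b : R) : 0 <= p <= 1 -> -1 <= a -> -1 <= b ->
  0 < p * a + (1 - p) * b ->
  exists2 t, 0 < t <= 1 & 0 < p * ln (1 + t * a) + (1 - p) * ln (1 + t * b).
Proof.
move=> /andP[p0 p1] a1 b1; set d := p * a + (1 - p) * b => d0.
set S := a ^+ 2 + b ^+ 2.
have S0 : 0 <= S by rewrite addr_ge0 ?sqr_ge0.
have den0 : 0 < 4 * S + 2 * d by lra.
pose t := d / (4 * S + 2 * d).
have t0 : 0 < t by rewrite divr_gt0.
have td : t * (4 * S + 2 * d) = d by rewrite divfK // gt_eqF.
have t_half : t <= 1/2 by nra.
exists t; first by apply/andP; split; lra.
have la := @ln1Dx_ge (t * a) ltac:(nra).
have lb := @ln1Dx_ge (t * b) ltac:(nra).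
have : p * (t * a - 2 * (t * a) ^+ 2) + (1 - p) * (t * b - 2 * (t * b) ^+ 2)
         <= p * ln (1 + t * a) + (1 - p) * ln (1 + t * b).
  by apply: lerD; apply: ler_wpM2l => //; lra.
have : t * (d - 2 * t * S)
         <= p * (t * a - 2 * (t * a) ^+ 2) + (1 - p) * (t * b - 2 * (t * b) ^+ 2).
  by rewrite /d /S !expr2; nra.
have : 0 < t * (d - 2 * t * S) by apply: mulr_gt0 => //; nra.
lra.
Qed.

Lemma expR_shift_conv (eta c u z t : R) :
    expR (- eta * z) = t * expR (- eta * u) + (1 - t) * expR (- eta * c) ->
  expR (eta * (c - z)) = 1 + t * (expR (eta * (c - u)) - 1).
Proof.
move=> ez.
have ecu : expR (eta * c) * expR (- eta * u) = expR (eta * (c - u)).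
  by rewrite -expRD; congr expR; ring.
have ecc : expR (eta * c) * expR (- eta * c) = 1.
  by rewrite -expRD -expR0; congr expR; ring.
rewrite (_ : eta * (c - z) = eta * c + - eta * z); last by ring.
rewrite expRD ez mulrDr [X in X + _]mulrCA [X in _ + X]mulrCA ecu ecc; ring.
Qed.

Lemma near_interior01 (g d : R) : g \in `[0, 1] -> 0 < d ->
  exists h, 0 < h < 1 /\ `|g - h| < d.
Proof.
rewrite in_itv /= => /andP[g0 g1] d0.
pose c := Num.min d 1.
have c0 : 0 < c by rewrite lt_min d0 ltr01.
have c1 : c <= 1 by rewrite ge_min lexx orbT.
have cd : c <= d by rewrite ge_min lexx.
exists ((1 - c) * g + c / 2); split; first by apply/andP; split; nra.
have -> : g - ((1 - c) * g + c / 2) = c * (g - 1/2) by ring.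
rewrite normrM gtr0_norm //.
have : `|g - 1/2| <= 1/2 by rewrite ler_norml; apply/andP; split; lra.
nra.
Qed.

Lemma within01_continuous_lt (f : R -> \bar R) (g b y : R) :
  {within `[0, 1], continuous f} -> g \in `[0, 1] -> f g = b%:E -> b < y ->
  exists2 d, 0 < d & forall h, h \in `[0, 1] -> `|g - h| < d -> (f h < y%:E)%E.
Proof.
move=> f_cont g01 fg b_lt.
have nbhs_lt : nbhs (f g) [set z | (z < y%:E)%E].
  rewrite fg; apply/nbhs_EFin.
  by apply: filterS (lt_nbhsl b_lt) => z /=; rewrite lte_fin.
have [d /= d0 near] := (subspace_continuousP _ _).1 f_cont g g01 _ nbhs_lt.
by exists d => // h h01 gh; apply: near.
Qed.

Local Open Scope ereal_scope.

Lemma le1_of_le_expR (x : \bar R) :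
  (forall e : R, (0 < e)%R -> x <= (expR e)%:E) -> x <= 1.
Proof.
move=> x_le; apply/lee_addgt0Pr => e e0.
have e1 : (0 < 1 + e)%R by lra.
by rewrite -EFinD -(lnK e1) x_le // ln_gt0 //; lra.
Qed.

Lemma expeR_regret_le (eta a c e : R) (x : \bar R) : (0 < eta)%R ->
  c%:E <= x + (e / eta)%:E ->
  expeR (eta%:E * (a%:E - x)) <= (expR (eta * (a - c) + e))%:E.
Proof.
move=> eta0; case: x => [b| |] //=.
- rewrite -EFinD !lee_fin ler_expR => cb.
  have : (eta * c <= eta * (b + e / eta))%R by rewrite ler_pM2l.
  by rewrite mulrDr mulrCA divff ?gt_eqF // mulr1; lra.
- by move=> _; rewrite addeNy gt0_muleNy ?lte_fin //= lee_fin expR_ge0.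
Qed.
End RealFacts.

Section Loss.
Variables (R : realType) (lam : lossfun R).
Hypotheses (lam_loss : is_loss lam) (lam_proper : proper_loss lam).

Lemma proper_loss_fin (p : R) (w : bool) : p \in `[0, 1] ->
  0 < (if w then p else 1 - p) -> lam p w \is a fin_num.
Proof.
move=> p01 qw.
have [lam_ge0 [_ [[g g01 [fin0 fin1]] _]]] := lam_loss.
have [p0 p1] := in01_weights_ge0 p01.
have term_ge0 v q : 0 <= q -> (0 <= q%:E * lam p v)%E.
  by move=> q0; rewrite mule_ge0 ?lee_fin ?lam_ge0.
have : ((if w then p else 1 - p)%:E * lam p w <=
        p%:E * lam g true + (1 - p)%:E * lam g false)%E.
  apply: le_trans (lam_proper p01 g01).
  by case: w qw => _; [apply: leeDl | apply: leeDr]; apply: term_ge0.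
have : (p%:E * lam g true + (1 - p)%:E * lam g false)%E \is a fin_num.
  by rewrite fin_numD !fin_numM.
rewrite fin_numE => /andP[_ /negbTE rhs_fin].
have := lam_ge0 p w p01.
by case: (lam p w) => [r| |] //= _; rewrite gt0_muley ?lte_fin // leye_eq rhs_fin.
Qed.

Lemma loss_superpred (h c0 c1 : R) : h \in `[0, 1] ->
  lam h false = c0%:E -> lam h true = c1%:E -> superpred lam (c0, c1).
Proof.
move=> h01 hc0 hc1; have [lam_ge0 _] := lam_loss.
split; [|split]; rewrite -?lee_fin -?hc0 -?hc1 ?lam_ge0 //.
by exists h; rewrite ?hc0 ?hc1.
Qed.

Lemma loss_le_near (g e : R) (w : bool) : g \in `[0, 1] -> 0 < e ->
  exists2 d, 0 < d &
    forall h, h \in `[0, 1] -> `|g - h| < d -> (lam h w <= lam g w + e%:E)%E.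
Proof.
move=> g01 e0; have [lam_ge0 [lam_cont _]] := lam_loss.
case gw: (lam g w) (lam_ge0 g w g01) => [b| |] // _.
  have [|d d0 near] := within01_continuous_lt (lam_cont w) g01 gw (y := b + e).
    by rewrite ltrDl.
  by exists d => // h h01 gh; rewrite -EFinD; apply/ltW/near.
by exists 1 => // h _ _; rewrite addye ?leey.
Qed.

Lemma loss_approx_interior (g e : R) : g \in `[0, 1] -> 0 < e ->
  exists h, 0 < h < 1 /\ forall w, (lam h w <= lam g w + e%:E)%E.
Proof.
move=> g01 e0.
have [d0 d00 near0] := loss_le_near false g01 e0.
have [d1 d10 near1] := loss_le_near true g01 e0.
have [|h [h_in gh]] := near_interior01 g01 (d := Num.min d0 d1).
  by rewrite lt_min d00.
have h01 := interior01_mem h_in.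
move: gh; rewrite lt_min => /andP[gh0 gh1].
by exists h; split => // -[]; [apply: near1 | apply: near0].
Qed.

Lemma proper_loss_vertex (g : R) (w : bool) : g \in `[0, 1] ->
  (lam (if w then 1%R else 0%R) w <= lam g w)%E.
Proof.
move=> g01; have i0 : (0 : R) \in `[0, 1] by rewrite in_itv /= lexx ler01.
have i1 : (1 : R) \in `[0, 1] by rewrite in_itv /= lexx ler01.
case: w.
- by have := lam_proper i1 g01; rewrite subrr !mul0e !adde0 !mul1e.
- by have := lam_proper i0 g01; rewrite subr0 !mul0e !add0e !mul1e.
Qed.

Lemma proper_superpred (p a0 a1 x y : R) : p \in `[0, 1] ->
  lam p false = a0%:E -> lam p true = a1%:E -> superpred lam (x, y) ->
  p * a1 + (1 - p) * a0 <= p * y + (1 - p) * x.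
Proof.
move=> p01 pa0 pa1 [_ [_ [g g01 [gx gy]]]].
have [p0 p1] := in01_weights_ge0 p01.
rewrite -lee_fin !EFinD !EFinM -pa0 -pa1.
apply: le_trans (lam_proper p01 g01) _.
by apply: leeD; apply: lee_wpmul2l; rewrite ?lee_fin.
Qed.

Variable eta : R.
Hypothesis lam_mix : mixable_with lam eta.

Lemma mixable_proper_superpred_le1 (p a0 a1 x y : R) : p \in `[0, 1] ->
  lam p false = a0%:E -> lam p true = a1%:E -> superpred lam (x, y) ->
  p * expR (eta * (a1 - y)) + (1 - p) * expR (eta * (a0 - x)) <= 1.
Proof.
move=> p01 pa0 pa1 Sxy; have [eta0 cvx] := lam_mix.
rewrite leNgt; apply/negP => gt1.
set a := expR (eta * (a1 - y)) - 1; set b := expR (eta * (a0 - x)) - 1.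
have [t /andP[t0 t1] ln_gain] : exists2 t, 0 < t <= 1 &
    0 < p * ln (1 + t * a) + (1 - p) * ln (1 + t * b).
  apply: ln_mean_gt0_near0; first by move: p01; rewrite in_itv.
  - by rewrite /a; have := expR_ge0 (eta * (a1 - y)); lra.
  - by rewrite /b; have := expR_ge0 (eta * (a0 - x)); lra.
  - by rewrite /a /b; lra.
pose E (xy : R * R) := (expR (- eta * xy.1), expR (- eta * xy.2)).
have /set_mem[[x' y'] Sxy' [ex ey]] := cvx _ _ (Itv01 (ltW t0) t1)
  (mem_set (imageP E Sxy)) (mem_set (imageP E (loss_superpred p01 pa0 pa1))).
have ey' := expR_shift_conv (u := y) ey; have ex' := expR_shift_conv (u := x) ex.
rewrite -/a -/b -ey' -ex' !expRK in ln_gain.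
have := proper_superpred p01 pa0 pa1 Sxy'.
have [p0 p1] := in01_weights_ge0 p01.
nra.
Qed.

Lemma vertex_exp_regret_le1 (g : R) (w : bool) : g \in `[0, 1] ->
  (expeR (eta%:E * (lam (if w then 1%R else 0%R) w - lam g w)) <= 1)%E.
Proof.
move=> g01; have [eta0 _] := lam_mix.
have vtx01 : (if w then 1 else 0 : R) \in `[0, 1].
  by case: w; rewrite in_itv /= lexx ler01.
have /fineK vtx_fin : lam (if w then 1%R else 0%R) w \is a fin_num.
  by apply: proper_loss_fin vtx01 _; case: w; rewrite ?subr0 ltr01.
set a := fine (lam (if w then 1%R else 0%R) w) in vtx_fin.
have := @expeR_regret_le _ eta a a 0 (lam g w) eta0.
rewrite mul0r addr0 vtx_fin subrr mulr0 addr0 expR0; apply.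
exact: proper_loss_vertex.
Qed.

Lemma interior_exp_regret_le1 (p g : R) : 0 < p < 1 -> g \in `[0, 1] ->
  (p%:E * expeR (eta%:E * (lam p true - lam g true)) +
   (1 - p)%:E * expeR (eta%:E * (lam p false - lam g false)) <= 1)%E.
Proof.
move=> p_in g01; have /andP[p0 p1] := p_in; have [eta0 _] := lam_mix.
have fin_interior h w : 0 < h < 1 -> lam h w = (fine (lam h w))%:E.
  move=> h_in; rewrite fineK // proper_loss_fin ?interior01_mem //.
  by move: h_in => /andP[h0 h1]; case: w; rewrite ?subr_gt0.
apply: le1_of_le_expR => e e0.
have [h [h_in h_near]] := loss_approx_interior g01 (divr_gt0 e0 eta0).
set a0 := fine (lam p false); set a1 := fine (lam p true).
set c0 := fine (lam h false); set c1 := fine (lam h true).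
have pa0 : lam p false = a0%:E := fin_interior p false p_in.
have pa1 : lam p true = a1%:E := fin_interior p true p_in.
have hc0 : lam h false = c0%:E := fin_interior h false h_in.
have hc1 : lam h true = c1%:E := fin_interior h true h_in.
have mix_le1 := mixable_proper_superpred_le1 (interior01_mem p_in) pa0 pa1
  (loss_superpred (interior01_mem h_in) hc0 hc1).
rewrite pa0 pa1; apply: (@le_trans _ _ (p%:E * (expR (eta * (a1 - c1) + e))%:E +
                          (1 - p)%:E * (expR (eta * (a0 - c0) + e))%:E)%E).
  apply: leeD; apply: lee_wpmul2l; rewrite ?lee_fin ?subr_ge0 ?(ltW p0) ?(ltW p1) //;
    by apply: expeR_regret_le => //; rewrite -?hc0 -?hc1 h_near.
rewrite -!EFinM -EFinD lee_fin !expRD; have := expR_gt0 e; nra.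
Qed.

Lemma mixable_proper_exp_regret_le1 (p g : R) : p \in `[0, 1] -> g \in `[0, 1] ->
  (p%:E * expeR (eta%:E * (lam p true - lam g true)) +
   (1 - p)%:E * expeR (eta%:E * (lam p false - lam g false)) <= 1)%E.
Proof.
move=> p01 g01.
have [->|p_neq0] := eqVneq p 0.
  by rewrite mul0e add0e subr0 mul1e; apply: vertex_exp_regret_le1 false g01.
have [->|p_neq1] := eqVneq p 1.
  by rewrite subrr mul0e adde0 mul1e; apply: vertex_exp_regret_le1 true g01.
apply: interior_exp_regret_le1 => //.
by move: p01; rewrite in_itv /= !lt_neqAle eq_sym p_neq0 p_neq1.
Qed.
End Loss.

Section Supermartingale.
Variables (R : realType) (N : nat) (n : 'I_N).
Local Open Scope ereal_scope.

Lemma Qfactor_ge0 (x : Etuple R N * R * bool) : 0 <= Qfactor n x.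
Proof. by case: x => [[[[gam eta] lam] p] w]; exact: expeR_ge0. Qed.

Lemma Q_ge0 (h : history R N) : 0 <= Q n h.
Proof.
apply: (big_ind (fun x => 0 <= x)) => //; first exact: mule_ge0.
by move=> x _; exact: Qfactor_ge0.
Qed.

Lemma Q_rcons (h : history R N) x : Q n (rcons h x) = Q n h * Qfactor n x.
Proof. by rewrite /Q big_rcons. Qed.

Lemma Qfactor_mean_le1 (e : Etuple R N) (p : R) : in_E e -> p \in `[0%R, 1%R] ->
  p%:E * Qfactor n (e, p, true) + (1 - p)%:E * Qfactor n (e, p, false) <= 1.
Proof.
case: e => [[gam eta] lam] /(_ n) [g01 [_ [[loss [_ proper]] mix]]] p01.
exact: mixable_proper_exp_regret_le1.
Qed.
End Supermartingale.

Theorem lemma3 (R : realType) (N : nat) (n : 'I_N) :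
  supermartingale (Q n : history R N -> \bar R).
Proof.
split=> [h _ | h e p _ eE p01]; first by rewrite gt_eqF // (lt_le_trans _ (Q_ge0 n h)).
have [p0 p1] := in01_weights_ge0 p01.
rewrite !Q_rcons !(muleCA _ (Q n h)) -ge0_muleDr ?mule_ge0 ?lee_fin ?Qfactor_ge0 //.
rewrite -[leRHS]mule1; apply: lee_wpmul2l; first exact: Q_ge0.
exact: Qfactor_mean_le1.
Qed.
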